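(* Let $G$ be a group, $H\subseteq G$ a finite subgroup, and $A$ a unital left $\mathbb{C}H$-module algebra. Then $C_c(G,A)^{\mathbb{C}H}\#\mathbb{C}G$ and $A\#\mathbb{C}H$ are Morita equivalent (as rings with local units).
   Context: Over $\mathbb{C}$. A left $\mathbb{C}H$-module algebra is an algebra $A$ with an action of $H$ by algebra automorphisms $a\mapsto h\rightharpoonup a$. $C_c(G,A)^{\mathbb{C}H}=\{f:G\to A \text{ finitely supported}: h\rightharpoonup f(g)=f(hg)\ \forall h\in H, g\in G\}$, an algebra under pointwise multiplication, with left $G$-action $(t\rightharpoonup f)(g)=f(gt)$. The smash product $C_c(G,A)^{\mathbb{C}H}\#\mathbb{C}G$ is $C_c(G,A)^{\mathbb{C}H}\otimes\mathbb{C}G$ with product $(F\#s)(F'\#t)=F(s\rightharpoonup F')\#st$; $A\#\mathbb{C}H$ is $A\otimes\mathbb{C}H$ with product $(a\#h)(b\#k)=a(h\rightharpoonup b)\#hk$. A ring $R$ has local units if every finite subset $T\subseteq R$ admits an idempotent $e$ with $te=et=t$ for all $t\in T$; a left $R$-module $M$ is unital if $RM=M$. Two rings with local units are Morita equivalent if their categories of unital left modules are equivalent. *)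

From HB Require Import structures.
From mathcomp Require Import all_boot all_order all_algebra.
From mathcomp Require Import boolp classical_sets cardinality fsbigop.
From mathcomp Require Import Rstruct complex.
From mathcomp Require monoid.

Set Implicit Arguments.
Unset Strict Implicit.
Unset Printing Implicit Defensive.

Import GRing.Theory.
Local Open Scope ring_scope.
Local Open Scope classical_set_scope.

Definition CC : fieldType := complex Rdefinitions.R.

Definition gmul {G : groupType} (x y : G) : G := monoid.mul x y.
Definition ginv {G : groupType} (x : G) : G := monoid.inv x.
Definition gone (G : groupType) : G := @monoid.one G.

(* A (not necessarily unital) ring is presented as a subset [pr_mem]  *)
(* of an ambient type [pr_car] carrying an addition and a             *)
(* multiplication; the ring is the subset [pr_mem] with the inherited *)
(* operations (in the instances below, [pr_mem] is closed under them). *)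

Record prering := PreRing {
  pr_car : Type;
  pr_add : pr_car -> pr_car -> pr_car;
  pr_mul : pr_car -> pr_car -> pr_car;
  pr_mem : pr_car -> Prop }.
Arguments pr_add : clear implicits.
Arguments pr_mul : clear implicits.
Arguments pr_mem : clear implicits.

Definition has_local_units (R : prering) : Prop :=
  forall T : seq (pr_car R), (forall t, List.In t T -> pr_mem R t) ->
  exists e, pr_mem R e /\ pr_mul R e e = e /\
    (forall t, List.In t T -> pr_mul R t e = t /\ pr_mul R e t = t).

Record lmodule (R : prering) := LModule {
  lm_car :> zmodType;
  lm_act : pr_car R -> lm_car -> lm_car;
  lm_actD : forall r, pr_mem R r -> forall m n : lm_car,
      lm_act r (m + n) = lm_act r m + lm_act r n;
  lm_addD : forall r s, pr_mem R r -> pr_mem R s -> forall m,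
      lm_act (pr_add R r s) m = lm_act r m + lm_act s m;
  lm_mulA : forall r s, pr_mem R r -> pr_mem R s -> forall m,
      lm_act (pr_mul R r s) m = lm_act r (lm_act s m) }.
Arguments lm_act {R} l _ _.

Definition unital_module (R : prering) (M : lmodule R) : Prop :=
  forall m : M, exists l : seq (pr_car R * M),
    (forall p, List.In p l -> pr_mem R p.1) /\
    m = \sum_(p <- l) lm_act M p.1 p.2.

Record umodule (R : prering) := UModule {
  um_mod :> lmodule R;
  um_unital : unital_module um_mod }.

Record mhom (R : prering) (M N : lmodule R) := MHom {
  mh_fun :> M -> N;
  mh_add : forall x y, mh_fun (x + y) = mh_fun x + mh_fun y;
  mh_act : forall r, pr_mem R r -> forall x,
      mh_fun (lm_act M r x) = lm_act N r (mh_fun x) }.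

Definition is_functor (R S : prering) (F : umodule R -> umodule S)
  (Fm : forall M N : umodule R, mhom M N -> mhom (F M) (F N)) : Prop :=
  (forall (M : umodule R) (f : mhom M M), (forall x, f x = x) ->
      forall y, Fm M M f y = y) /\
  (forall (M N P : umodule R) (f : mhom M N) (g : mhom N P) (h : mhom M P),
      (forall x, h x = g (f x)) ->
      forall y, Fm M P h y = Fm N P g (Fm M N f y)).

Definition morita_equivalent (R S : prering) : Prop :=
  exists (F : umodule R -> umodule S)
         (Fm : forall M N : umodule R, mhom M N -> mhom (F M) (F N))
         (G : umodule S -> umodule R)
         (Gm : forall M N : umodule S, mhom M N -> mhom (G M) (G N))
         (eta : forall M : umodule R, mhom (G (F M)) M)
         (eps : forall N : umodule S, mhom (F (G N)) N),
    is_functor Fm /\ is_functor Gm /\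
    (forall M, bijective (eta M)) /\
    (forall (M N : umodule R) (f : mhom M N) x,
        f (eta M x) = eta N (Gm _ _ (Fm M N f) x)) /\
    (forall N, bijective (eps N)) /\
    (forall (M N : umodule S) (f : mhom M N) x,
        f (eps M x) = eps N (Fm _ _ (Gm M N f) x)).

Definition finite_subgroup (G : groupType) (H : set G) : Prop :=
  H (gone G) /\ (forall x y, H x -> H y -> H (gmul x y)) /\
  (forall x, H x -> H (ginv x)) /\ finite_set H.

(* Only the values of
   [act] on elements of H matter. *)
Definition module_algebra (G : groupType) (H : set G) (A : algType CC)
  (act : G -> A -> A) : Prop :=
  (forall a, act (gone G) a = a) /\
  (forall h k, H h -> H k -> forall a, act (gmul h k) a = act h (act k a)) /\
  (forall h, H h -> forall (c : CC) (a b : A), act h (c *: a + b) = c *: act h a + act h b) /\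
  (forall h, H h -> forall a b : A, act h (a * b) = act h a * act h b) /\
  (forall h, H h -> act h 1 = 1).

Definition fin_supp (G : groupType) (A : zmodType) (f : G -> A) : Prop :=
  finite_set [set g | f g <> 0].

Definition CcH (G : groupType) (H : set G) (A : algType CC) (act : G -> A -> A)
  (F : G -> A) : Prop :=
  fin_supp F /\ (forall h g, H h -> act h (F g) = F (gmul h g)).

(* C_c(G,A)^{CH} # CG: an element sum_s F_s # s is encoded by
   Phi : G -> (G -> A) with Phi s = F_s (finitely many nonzero).
   Product: (F # s)(F' # t) = F (s -> F') # st, with (s -> F')(g) = F'(g s),
   so (Phi Psi)(u)(g) = sum_s Phi(s)(g) * Psi(s^-1 u)(g s). *)
Definition smashG (G : groupType) (H : set G) (A : algType CC)
  (act : G -> A -> A) : prering :=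
  @PreRing (G -> G -> A)
    (fun Phi Psi s g => Phi s g + Psi s g)
    (fun Phi Psi u g =>
       \sum_(s \in [set: G]) (Phi s g * Psi (gmul (ginv s) u) (gmul g s)))
    (fun Phi => finite_set [set s | exists g, Phi s g <> 0] /\
                forall s, CcH H act (Phi s)).

(* A # CH: an element sum_h a_h # h is encoded by x : G -> A vanishing
   outside H.  Product: (a # h)(b # k) = a (h -> b) # hk, so
   (x y)(u) = sum_{h in H} x(h) * (h -> y(h^-1 u)). *)
Definition smashH (G : groupType) (H : set G) (A : algType CC)
  (act : G -> A -> A) : prering :=
  @PreRing (G -> A)
    (fun x y g => x g + y g)
    (fun x y u => \sum_(h \in H) (x h * act h (y (gmul (ginv h) u))))
    (fun x => forall g, ~ H g -> x g = 0).

From HB Require Import structures.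
From mathcomp Require Import all_boot all_order all_algebra.
From mathcomp Require Import boolp classical_sets functions cardinality fsbigop.
From mathcomp Require Import Rstruct complex.
From mathcomp Require monoid.
From mathcomp Require Import finmap.

(* Write R := C_c(G,A)^H # CG and S := A # CH.  The idempotent
   e = [g in H] # 1 of R identifies S with eRe via a # h |-> [g in H] g.a # h,
   so M |-> eM is a functor from unital R-modules to unital S-modules.  Its
   quasi-inverse ind induces an S-module N up to G: ind N consists of the
   finitely supported families xi : G -> N with xi(s h) = (1 # h^-1) xi(s)
   for h in H.  The isomorphism ind(eM) -> M sends xi to sum_t p_t xi(t),
   where p_t = |H|^-1 [g in H t^-1] # t; its inverse is m |-> (t |-> q_t m)
   with q_t = [g in H] # t^-1, and the factor |H|^-1 compensates for the |H|
   indices t' in t H giving the same contribution.  The isomorphism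
   e(ind N) -> N is evaluation at 1.  The idempotents [g in H X] # 1, X
   finite, are local units of R, and 1 # 1 is a unit of S. *)

Set Implicit Arguments.
Unset Strict Implicit.
Unset Printing Implicit Defensive.

Import GRing.Theory.
Local Open Scope ring_scope.

Record zmodPred (V : zmodType) := ZmodPred {
  zmod_pred :> V -> Prop;
  zmod_pred0 : zmod_pred 0;
  zmod_predN : forall x, zmod_pred x -> zmod_pred (- x);
  zmod_predD : forall x y, zmod_pred x -> zmod_pred y -> zmod_pred (x + y) }.

Record zsub (V : zmodType) (P : zmodPred V) := ZSub { zval : V; zvalP : P zval }.
Arguments ZSub {V P}.
HB.instance Definition _ V P := gen_eqMixin (@zsub V P).
HB.instance Definition _ V P := gen_choiceMixin (@zsub V P).

Lemma zval_inj V (P : zmodPred V) : injective (@zval V P).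
Proof. by move=> [x px] [y py] /= exy; subst; congr ZSub; exact: Prop_irrelevance. Qed.

Section ZsubZmodule.
Variables (V : zmodType) (P : zmodPred V).

Definition zsub0 : zsub P := ZSub 0 (zmod_pred0 P).
Definition zsubN (x : zsub P) : zsub P := ZSub (- zval x) (zmod_predN (zvalP x)).
Definition zsubD (x y : zsub P) : zsub P :=
  ZSub (zval x + zval y) (zmod_predD (zvalP x) (zvalP y)).

Lemma zsubA : associative zsubD.
Proof. by move=> x y z; apply: zval_inj; rewrite /= addrA. Qed.
Lemma zsubC : commutative zsubD.
Proof. by move=> x y; apply: zval_inj; rewrite /= addrC. Qed.
Lemma zsub0D : left_id zsub0 zsubD.
Proof. by move=> x; apply: zval_inj; rewrite /= add0r. Qed.
Lemma zsubND : left_inverse zsub0 zsubN zsubD.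
Proof. by move=> x; apply: zval_inj; rewrite /= addNr. Qed.

End ZsubZmodule.

HB.instance Definition _ V P :=
  GRing.isZmodule.Build (@zsub V P) (@zsubA V P) (@zsubC V P) (@zsub0D V P) (@zsubND V P).

Lemma zval_sum (V : zmodType) (P : zmodPred V) (I : Type) (s : seq I) (F : I -> zsub P) :
  zval (\sum_(i <- s) F i) = \sum_(i <- s) zval (F i).
Proof. exact: (big_morph (@zval V P)). Qed.

Lemma eq_big_In (V : zmodType) (I : Type) (l : seq I) (F F' : I -> V) :
  (forall p, List.In p l -> F p = F' p) -> \sum_(p <- l) F p = \sum_(p <- l) F' p.
Proof.
elim: l => [|p l ih] h; first by rewrite !big_nil.
by rewrite !big_cons h /=; [rewrite ih // => q hq; apply: h; right | left].
Qed.

Lemma sumr_if_const (V : zmodType) (T : Type) (X : seq T) (P : pred T) (y : V) :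
  \sum_(t <- X) (if P t then y else 0) = y *+ count P X.
Proof.
elim: X => [|t X ih]; first by rewrite big_nil.
by rewrite big_cons ih /=; case: (P t); rewrite ?add0r // mulrS.
Qed.

Local Open Scope classical_set_scope.

Section GroupSums.
Variable G : groupType.

Lemma gmulA (x y z : G) : gmul x (gmul y z) = gmul (gmul x y) z.
Proof. exact: monoid.mulgA. Qed.
Lemma gmul1l (x : G) : gmul (gone G) x = x. Proof. exact: monoid.mul1g. Qed.
Lemma gmul1r (x : G) : gmul x (gone G) = x. Proof. exact: monoid.mulg1. Qed.
Lemma gmulVl (x : G) : gmul (ginv x) x = gone G. Proof. exact: monoid.mulVg. Qed.
Lemma gmulVr (x : G) : gmul x (ginv x) = gone G. Proof. exact: monoid.mulgV. Qed.
Lemma ginvK (x : G) : ginv (ginv x) = x. Proof. exact: monoid.invgK. Qed.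
Lemma ginvM (x y : G) : ginv (gmul x y) = gmul (ginv y) (ginv x).
Proof. exact: monoid.invgM. Qed.
Lemma ginv1 : ginv (gone G) = gone G. Proof. exact: monoid.invg1. Qed.
Lemma gmulKl (x y : G) : gmul (ginv x) (gmul x y) = y.
Proof. by rewrite gmulA gmulVl gmul1l. Qed.
Lemma gmulKVl (x y : G) : gmul x (gmul (ginv x) y) = y.
Proof. by rewrite gmulA gmulVr gmul1l. Qed.
Lemma gmulKr (x y : G) : gmul (gmul y x) (ginv x) = y.
Proof. by rewrite -gmulA gmulVr gmul1r. Qed.
Lemma gmulKVr (x y : G) : gmul (gmul y (ginv x)) x = y.
Proof. by rewrite -gmulA gmulVl gmul1r. Qed.
Lemma gmulIl (x y z : G) : gmul x y = gmul x z -> y = z.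
Proof. by move=> e; rewrite -(gmulKl x y) e gmulKl. Qed.

Lemma eq_ginvM1 (h u : G) : (gmul (ginv h) u == gone G) = (u == h).
Proof.
apply/eqP/eqP => [e1|->]; last exact: gmulVl.
by rewrite -(gmulKVl h u) e1 gmul1r.
Qed.

Lemma eq_gmulVl (t u v : G) : (gmul (ginv t) u == v) = (u == gmul t v).
Proof. by apply/eqP/eqP => [<-|->]; rewrite ?gmulKl ?gmulKVl. Qed.

Lemma eq_gmull (t u v : G) : (gmul t u == v) = (u == gmul (ginv t) v).
Proof. by apply/eqP/eqP => [<-|->]; rewrite ?gmulKl ?gmulKVl. Qed.

(* The sum over all of G of a finitely supported function; [fsbig] gives 0
   when the support is infinite. *)
Definition gsum (V : zmodType) (F : G -> V) := \sum_(i \in [set: G]) F i.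

Lemma gsum_fset (V : zmodType) (K : {fset G}) (F : G -> V) :
  (forall i, i \notin K -> F i = 0) -> gsum F = \sum_(i <- K) F i.
Proof. exact: fsbigTE. Qed.

Lemma gsum1 (V : zmodType) (a : G) (F : G -> V) :
  (forall i, i != a -> F i = 0) -> gsum F = F a.
Proof.
move=> h; rewrite (@gsum_fset _ [fset a]%fset) ?big_seq_fset1 // => i.
by rewrite inE => /h.
Qed.

Lemma gsum0 (V : zmodType) (F : G -> V) : (forall i, F i = 0) -> gsum F = 0.
Proof. by move=> h; rewrite (@gsum_fset _ fset0) ?big_seq_fset0. Qed.

Lemma eq_gsum (V : zmodType) (F F' : G -> V) : (forall i, F i = F' i) -> gsum F = gsum F'.
Proof. by move=> h; congr gsum; apply: funext. Qed.

Lemma gsum_mull (V : zmodType) (a : G) (F : G -> V) :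
  gsum F = gsum (fun s => F (gmul a s)).
Proof.
rewrite /gsum (reindex_fsbigT (fun s => gmul a s)) //.
by exists (fun s => gmul (ginv a) s) => s; rewrite ?gmulKl ?gmulKVl.
Qed.

Lemma gsum_morph (V W : zmodType) (f : V -> W) (K : {fset G}) (F : G -> V) :
  f 0 = 0 -> (forall x y, f (x + y) = f x + f y) ->
  (forall i, i \notin K -> F i = 0) -> f (gsum F) = gsum (fun i => f (F i)).
Proof.
move=> f0 fD hK; rewrite (gsum_fset hK) (@gsum_fset _ K); last by move=> i /hK ->.
exact: (big_morph f fD f0).
Qed.

Lemma gsumD (V : zmodType) (K : {fset G}) (F F' : G -> V) :
  (forall i, i \notin K -> F i = 0) -> (forall i, i \notin K -> F' i = 0) ->
  gsum (fun i => F i + F' i) = gsum F + gsum F'.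
Proof.
move=> h h'; rewrite (gsum_fset h) (gsum_fset h') (@gsum_fset _ K) ?big_split //.
by move=> i iK; rewrite h ?h' ?addr0.
Qed.

Lemma exchange_gsum (V : zmodType) (K1 K2 : {fset G}) (F : G -> G -> V) :
  (forall i j, i \notin K1 -> F i j = 0) -> (forall i j, j \notin K2 -> F i j = 0) ->
  gsum (fun i => gsum (fun j => F i j)) = gsum (fun j => gsum (fun i => F i j)).
Proof.
move=> h1 h2.
rewrite (@gsum_fset _ K1); last by move=> i iK; apply: gsum0 => j; rewrite h1.
rewrite (@gsum_fset _ K2); last by move=> j jK; apply: gsum0 => i; rewrite h2.
rewrite (eq_bigr (fun i => \sum_(j <- K2) F i j)); last first.
  by move=> i _; apply: gsum_fset => j /h2.
rewrite [RHS](eq_bigr (fun j => \sum_(i <- K1) F i j)); last first.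
  by move=> j _; apply: gsum_fset => i /h1.
exact: exchange_big.
Qed.

End GroupSums.

Section PreringModules.
Variables (P : prering) (z : pr_car P).
Hypotheses (mem_z : pr_mem P z) (addzz : pr_add P z z = z)
  (mem_add : forall x y, pr_mem P x -> pr_mem P y -> pr_mem P (pr_add P x y)).
Variable M : lmodule P.

Lemma lm_act_zero m : lm_act M z m = 0.
Proof.
have e := @lm_addD _ M _ _ mem_z mem_z m; rewrite addzz in e.
by apply: (@addrI _ (lm_act M z m)); rewrite addr0 -e.
Qed.

Lemma lm_act0 r : pr_mem P r -> lm_act M r 0 = 0.
Proof.
move=> mr; have e := @lm_actD _ M _ mr 0 0; rewrite addr0 in e.
by apply: (@addrI _ (lm_act M r 0)); rewrite addr0 -e.
Qed.

Lemma lm_actN r m : pr_mem P r -> lm_act M r (- m) = - lm_act M r m.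
Proof.
move=> mr; apply: (@addrI _ (lm_act M r m)).
by rewrite -lm_actD // !subrr lm_act0.
Qed.

Lemma lm_act_sum r (I : Type) (s : seq I) (F : I -> M) : pr_mem P r ->
  lm_act M r (\sum_(i <- s) F i) = \sum_(i <- s) lm_act M r (F i).
Proof. by move=> mr; apply: (big_morph _ (@lm_actD _ M _ mr) (lm_act0 mr)). Qed.

Definition prsum (I : Type) (s : seq I) (F : I -> pr_car P) :=
  foldr (fun i acc => pr_add P (F i) acc) z s.

Lemma prsum_mem (I : Type) (s : seq I) (F : I -> pr_car P) :
  (forall i, pr_mem P (F i)) -> pr_mem P (prsum s F).
Proof. by move=> h; elim: s => //= i s ih; apply: mem_add. Qed.

Lemma lm_act_prsum (I : Type) (s : seq I) (F : I -> pr_car P) m :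
  (forall i, pr_mem P (F i)) ->
  lm_act M (prsum s F) m = \sum_(i <- s) lm_act M (F i) m.
Proof.
move=> h; elim: s => /= [|i s ih]; first by rewrite big_nil lm_act_zero.
by rewrite big_cons lm_addD ?ih //; apply: prsum_mem.
Qed.

End PreringModules.

Lemma mh0 (P : prering) (M N : lmodule P) (f : mhom M N) : f 0 = 0.
Proof. by apply: (@addrI _ (f 0)); rewrite -mh_add !addr0. Qed.

Section Smash.
Variables (G : groupType) (H : set G) (A : algType CC) (act : G -> A -> A).
Hypothesis subH : finite_subgroup H.
Hypothesis modA : module_algebra H act.

Local Notation one := (gone G).

Let R := smashG H act.
Let S := smashH H act.

Definition inH (x : G) : bool := `[< H x >].
Lemma inHP x : reflect (H x) (inH x). Proof. exact: asboolP. Qed.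
Lemma inH_H x : inH x -> H x. Proof. by move/inHP. Qed.

Lemma groupH1 : H one. Proof. by case: subH. Qed.
Lemma groupHM x y : H x -> H y -> H (gmul x y). Proof. by case: subH => _ [+ _]; apply. Qed.
Lemma groupHV x : H x -> H (ginv x). Proof. by case: subH => _ [_ [+ _]]; apply. Qed.
Lemma finH : finite_set H. Proof. by case: subH => _ [_ [_]]. Qed.

Lemma groupHMl x y : H x -> H (gmul x y) = H y.
Proof.
move=> hx; apply: propext; split=> h; last exact: groupHM.
by rewrite -(gmulKl x y); apply: groupHM => //; apply: groupHV.
Qed.
Lemma groupHMr x y : H y -> H (gmul x y) = H x.
Proof.
move=> hy; apply: propext; split=> h; last exact: groupHM.
by rewrite -(gmulKr y x); apply: groupHM => //; apply: groupHV.
Qed.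
Lemma groupHVE x : H (ginv x) = H x.
Proof.
apply: propext; split=> h; last exact: groupHV.
by rewrite -(ginvK x); apply: groupHV.
Qed.

Lemma inH1 : inH one. Proof. exact/inHP/groupH1. Qed.
Lemma inHMl x y : H x -> inH (gmul x y) = inH y.
Proof. by move=> hx; rewrite /inH groupHMl. Qed.
Lemma inHMr x y : H y -> inH (gmul x y) = inH x.
Proof. by move=> hy; rewrite /inH groupHMr. Qed.
Lemma inHV x : inH (ginv x) = inH x. Proof. by rewrite /inH groupHVE. Qed.

Lemma in_fsetH s : (s \in fset_set H) = inH s.
Proof. by rewrite in_fset_set; [apply/idP/inHP; rewrite in_setE | exact: finH]. Qed.

Lemma act_unit a : act one a = a. Proof. by case: modA. Qed.
Lemma actM h k a : H h -> H k -> act (gmul h k) a = act h (act k a).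
Proof. by case: modA => _ [+ _] hh hk; apply. Qed.
Lemma act_mul h a b : H h -> act h (a * b) = act h a * act h b.
Proof. by case: modA => _ [_ [_ [+ _]]] hh; apply. Qed.
Lemma act1 h : H h -> act h 1 = 1.
Proof. by case: modA => _ [_ [_ [_ +]]] hh; apply. Qed.
Lemma actL h (c : CC) a b : H h -> act h (c *: a + b) = c *: act h a + act h b.
Proof. by case: modA => _ [_ [+ _]] hh; apply. Qed.
Lemma actD h a b : H h -> act h (a + b) = act h a + act h b.
Proof. by move=> hh; have := @actL h 1 a b hh; rewrite !scale1r. Qed.
Lemma act0 h : H h -> act h 0 = 0.
Proof.
move=> hh; have e := actD 0 0 hh; rewrite addr0 in e.
by apply: (@addrI _ (act h 0)); rewrite addr0 -e.
Qed.
Lemma actZ h c a : H h -> act h (c *: a) = c *: act h a.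
Proof. by move=> hh; rewrite -[c *: a]addr0 actL // act0 // addr0. Qed.

Lemma sumH_gsum (V : zmodType) (F : G -> V) :
  \sum_(h \in H) F h = gsum (fun h => if inH h then F h else 0).
Proof.
rewrite fsbig_mkcond /gsum; apply: eq_fsbigr => x _.
by rewrite /patch; have -> // : (x \in H) = inH x; apply/idP/inHP; rewrite in_setE.
Qed.

Lemma gsum_fsetH (V : zmodType) (F : G -> V) :
  (forall s, ~~ inH s -> F s = 0) -> gsum F = \sum_(s <- fset_set H) F s.
Proof. by move=> h; apply: gsum_fset => i; rewrite in_fsetH; apply: h. Qed.

(** * The ring A # CH *)

Lemma mulSE x y u :
  pr_mul S x y u = \sum_(h \in H) (x h * act h (y (gmul (ginv h) u))).
Proof. by []. Qed.

Definition memS x := pr_mem S x.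
Definition zeroS : G -> A := fun _ => 0.

Lemma memS0 : memS zeroS. Proof. by []. Qed.
Lemma addS0 : pr_add S zeroS zeroS = zeroS.
Proof. by apply: funext => u; rewrite /= addr0. Qed.
Lemma memSD x y : memS x -> memS y -> memS (pr_add S x y).
Proof. by move=> mx my g hg /=; rewrite mx ?my ?addr0. Qed.

(* [sH a k] is a # k *)
Definition sH (a : A) (k : G) : G -> A := fun v => if v == k then a else 0.
Definition deltaH k := sH 1 k.
Definition embA a := sH a one.

Lemma memS_sH a k : H k -> memS (sH a k).
Proof. by move=> hk g hg; rewrite /sH; case: eqP => // e; rewrite e in hg. Qed.
Lemma memS_deltaH k : H k -> memS (deltaH k). Proof. exact: memS_sH. Qed.
Lemma memS_embA a : memS (embA a). Proof. exact/memS_sH/groupH1. Qed.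

Lemma mulS_sH a b k j : H k -> H j ->
  pr_mul S (sH a k) (sH b j) = sH (a * act k b) (gmul k j).
Proof.
move=> hk hj; apply: funext => u; rewrite mulSE sumH_gsum (gsum1 (a := k)).
  rewrite /inH; case: asboolP => // _; rewrite /sH eqxx eq_gmulVl.
  by case: eqP => _; rewrite ?act0 ?mulr0.
by move=> i /negPf ik; rewrite /sH ik mul0r; case: ifP.
Qed.

Lemma embA0 : embA 0 = zeroS. Proof. by apply: funext => v; rewrite /embA /sH; case: ifP. Qed.
Lemma embAD a b : embA (a + b) = pr_add S (embA a) (embA b).
Proof. by apply: funext => v; rewrite /embA /sH /=; case: ifP; rewrite ?addr0. Qed.
Lemma embAM a b : pr_mul S (embA a) (embA b) = embA (a * b).
Proof. by rewrite /embA mulS_sH ?act_unit ?gmul1l //; exact: groupH1. Qed.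

Lemma embA_sum (I : Type) (s : seq I) (c : I -> A) :
  embA (\sum_(i <- s) c i) = prsum (P := S) zeroS s (fun i => embA (c i)).
Proof.
elim: s => /= [|i s ih]; first by rewrite big_nil embA0.
by rewrite big_cons embAD ih.
Qed.

Lemma mulS_delta1r x : memS x -> pr_mul S x (deltaH one) = x.
Proof.
move=> mx; apply: funext => u; rewrite mulSE sumH_gsum.
case hu: (inH u).
  rewrite (gsum1 (a := u)) ?hu /deltaH /sH ?eq_ginvM1 ?eqxx ?act1 ?mulr1 //.
    exact: inH_H.
  move=> i ne; case: ifP => // /inHP hi.
  by rewrite eq_ginvM1 eq_sym (negbTE ne) act0 ?mulr0.
rewrite mx; last by apply/inHP; rewrite hu.
apply: gsum0 => i; case: ifP => // /inHP hi.
rewrite /deltaH /sH eq_ginvM1; case: eqP => [e1|_]; last by rewrite act0 ?mulr0.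
by move: hu; rewrite e1; move/inHP.
Qed.

Lemma mulS_delta1l x : memS x -> pr_mul S (deltaH one) x = x.
Proof.
move=> mx; apply: funext => u; rewrite mulSE sumH_gsum (gsum1 (a := one)).
  by rewrite inH1 /deltaH /sH eqxx mul1r ginv1 gmul1l act_unit.
by move=> i /negbTE ne; rewrite /deltaH /sH ne mul0r; case: ifP.
Qed.

Lemma local_units_smashH : has_local_units S.
Proof.
move=> T hT; exists (deltaH one); split; first exact/memS_deltaH/groupH1.
split; first exact/mulS_delta1r/memS_deltaH/groupH1.
by move=> t tT; split; [apply: mulS_delta1r | apply: mulS_delta1l]; apply: hT.
Qed.

Section SModules.
Variable N : lmodule S.

Lemma actS_zero n : lm_act N zeroS n = 0.
Proof. exact: (lm_act_zero memS0 addS0). Qed.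
Lemma actS0 x : memS x -> lm_act N x 0 = 0.
Proof. exact: lm_act0. Qed.
Lemma act_embA0 n : lm_act N (embA 0) n = 0.
Proof. by rewrite embA0 actS_zero. Qed.

Lemma act_embA_sum (I : Type) (s : seq I) (c : I -> A) n :
  lm_act N (embA (\sum_(i <- s) c i)) n = \sum_(i <- s) lm_act N (embA (c i)) n.
Proof.
by rewrite embA_sum (lm_act_prsum memS0 addS0 memSD) // => i; exact: memS_embA.
Qed.

End SModules.

Lemma act_delta1 (N : umodule S) (n : N) : lm_act N (deltaH one) n = n.
Proof.
have [l [hl ->]] := um_unital n.
rewrite (lm_act_sum _ _ (memS_deltaH groupH1)); apply: eq_big_In => p pl.
rewrite -lm_mulA ?mulS_delta1l //; [exact: hl | exact: memS_deltaH groupH1 | exact: hl].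
Qed.

(** * The ring C_c(G,A)^H # CG *)

Lemma mulRE Phi Psi u g : pr_mul R Phi Psi u g =
  gsum (fun s => Phi s g * Psi (gmul (ginv s) u) (gmul g s)).
Proof. by []. Qed.

Definition finsupp (V : zmodType) (f : G -> V) :=
  exists K : {fset G}, forall i, i \notin K -> f i = 0.

Lemma finite_finsupp (V : zmodType) (f : G -> V) :
  finite_set [set i | f i <> 0] -> finsupp f.
Proof.
move=> fin; exists (fset_set [set i | f i <> 0]) => i.
rewrite in_fset_set // => hn; apply: contra_notP (negP hn) => nz; exact: mem_set.
Qed.

Lemma finsuppD (V : zmodType) (f f' : G -> V) :
  finsupp f -> finsupp f' -> finsupp (f + f').
Proof.
move=> [K hK] [K' hK']; exists (K `|` K')%fset => i; rewrite inE negb_or => /andP[a b].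
by rewrite addrfctE /= hK ?hK' ?addr0.
Qed.

Definition supp_in (Phi : G -> G -> A) (K : {fset G}) :=
  forall s g, (s \notin K) || (g \notin K) -> Phi s g = 0.

Lemma supp_inS Phi K s g : supp_in Phi K -> s \notin K -> Phi s g = 0.
Proof. by move=> h hs; apply: h; rewrite hs. Qed.
Lemma supp_inG Phi K s g : supp_in Phi K -> g \notin K -> Phi s g = 0.
Proof. by move=> h hs; apply: h; rewrite hs orbT. Qed.
Lemma supp_in_sub Phi K K' : supp_in Phi K -> fsubset K K' -> supp_in Phi K'.
Proof.
move=> h sub s g hsg; apply: h; move: hsg; apply: contraTT; rewrite !negb_or !negbK.
by move=> /andP[a b]; rewrite !(fsubsetP sub).
Qed.
Lemma supp_in_nz Phi K u g : supp_in Phi K -> Phi u g != 0 -> (u \in K) && (g \in K).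
Proof. by move=> hK; apply: contraNT; rewrite negb_and => hh; apply/eqP; exact: hK. Qed.

Definition memR Phi := pr_mem R Phi.

Lemma memR_act Phi s h g : memR Phi -> H h -> act h (Phi s g) = Phi s (gmul h g).
Proof. by move=> [_ +] hh => /(_ s) [_]; apply. Qed.

Lemma memR_supp Phi : memR Phi -> exists K, supp_in Phi K.
Proof.
move=> [fin inv].
have [K1 hK1] : exists K1 : {fset G}, forall s g, s \notin K1 -> Phi s g = 0.
  exists (fset_set [set s | exists g, Phi s g <> 0]) => s g.
  rewrite in_fset_set // => hn; apply: contra_notP (negP hn) => nz; apply: mem_set.
  by exists g.
have row_supp (l : seq G) :
    exists K2 : {fset G}, forall s g, s \in l -> g \notin K2 -> Phi s g = 0.
  elim: l => [|s0 l [K ih]]; first by exists fset0.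
  have [K' hK'] := finite_finsupp (proj1 (inv s0)).
  exists (K `|` K')%fset => s g; rewrite !inE negb_or => hs /andP[a b].
  case/orP: hs => [/eqP ->|hs]; first by rewrite hK'.
  exact: ih.
have [K2 hK2] := row_supp (enum_fset K1).
exists (K1 `|` K2)%fset => s g; rewrite !inE !negb_or.
case: (boolP (s \in K1)) => hs /=; last by rewrite hK1.
by move=> /andP[_ hg]; apply: hK2.
Qed.

Lemma memR_intro Phi K : supp_in Phi K ->
  (forall s h g, H h -> act h (Phi s g) = Phi s (gmul h g)) -> memR Phi.
Proof.
move=> hK hinv; split.
  apply: (@finite_subfset _ K) => s /= [g]; apply: contra_notT => hs.
  exact: supp_inS _ hK hs.
move=> s; split; last by move=> h g hh; apply: hinv.
apply: (@finite_subfset _ K) => g /=; apply: contra_notT => hg.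
exact: supp_inG _ hK hg.
Qed.

Lemma supp_in_seq (T : seq (G -> G -> A)) : (forall t, List.In t T -> memR t) ->
  exists K, forall t, List.In t T -> supp_in t K.
Proof.
elim: T => [|t T ih] hT; first by exists fset0.
have [K hK] := ih (fun t' h => hT t' (or_intror h)).
have [K' hK'] := memR_supp (hT t (or_introl erefl)).
exists (K `|` K')%fset => t' [<-|/hK h].
  by apply: supp_in_sub hK' _; apply/fsubsetP => x; rewrite inE orbC => ->.
by apply: supp_in_sub h _; apply/fsubsetP => x; rewrite inE => ->.
Qed.

Definition zeroR : G -> G -> A := fun _ _ => 0.

Lemma memR0 : memR zeroR.
Proof. by apply: (@memR_intro _ fset0) => // s h g hh; exact: act0. Qed.
Lemma addR0 : pr_add R zeroR zeroR = zeroR.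
Proof. by apply: funext => u; apply: funext => g; rewrite /= addr0. Qed.

Lemma memRD Phi Psi : memR Phi -> memR Psi -> memR (pr_add R Phi Psi).
Proof.
move=> mP mQ; have [K hK] := memR_supp mP; have [K' hK'] := memR_supp mQ.
apply: (@memR_intro _ (K `|` K')%fset).
  move=> s g; rewrite !inE !negb_or => hsg /=.
  by rewrite (hK s g) ?(hK' s g) ?addr0 //;
    case/orP: hsg => /andP[a b]; rewrite ?a ?b ?orbT.
by move=> s h g hh /=; rewrite actD // !memR_act.
Qed.

Lemma memRM Phi Psi : memR Phi -> memR Psi -> memR (pr_mul R Phi Psi).
Proof.
move=> mP mQ; have [K hK] := memR_supp mP; have [K' hK'] := memR_supp mQ.
apply: (@memR_intro _ (K `|` [fset gmul a b | a in K, b in K'])%fset).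
  move=> s g; rewrite !inE !negb_or => hsg; rewrite mulRE; apply: gsum0 => w.
  case: (boolP (g \in K)) => hg; last by rewrite (supp_inG _ hK hg) mul0r.
  case: (boolP (w \in K)) => hw; last by rewrite (supp_inS _ hK hw) mul0r.
  rewrite (supp_inS _ hK') ?mulr0 //.
  have : s \notin [fset gmul a b | a in K, b in K']%fset.
    by case/orP: hsg => /andP[]; rewrite ?hg.
  apply: contra => hv; apply/imfset2P; exists w => //; exists (gmul (ginv w) s) => //.
  by rewrite gmulKVl.
move=> s h g hh; rewrite !mulRE (@gsum_morph _ _ _ (act h) K); first last.
- by move=> w hw; rewrite (supp_inS _ hK hw) mul0r.
- by move=> a b; rewrite actD.
- exact: act0.
by apply: eq_gsum => w; rewrite act_mul // !memR_act // gmulA.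
Qed.

Lemma memR_indicator k (p : pred G) (a : A) (K : {fset G}) :
  (forall g, p g -> g \in K) -> (forall h g, H h -> p (gmul h g) = p g) ->
  (forall h, H h -> act h a = a) ->
  memR (fun u g => if (u == k) && p g then a else 0).
Proof.
move=> pK pinv ainv; apply: (@memR_intro _ (k |` K)%fset).
  move=> s g; rewrite !inE !negb_or => hsg.
  case: (eqVneq s k) => [esk|ne] //=; case pg: (p g) => //.
  by move: hsg; rewrite esk eqxx (pK _ pg) !andbF.
by move=> s h g hh; rewrite pinv //; case: ifP => _; [exact: ainv | exact: act0].
Qed.

Lemma prsumSE (I : Type) (l : seq I) (F : I -> G -> A) v :
  prsum (P := S) zeroS l F v = \sum_(i <- l) F i v.
Proof. by elim: l => /= [|i l ih]; rewrite ?big_nil ?big_cons ?ih. Qed.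

Lemma prsumRE (I : Type) (l : seq I) (F : I -> G -> G -> A) v g :
  prsum (P := R) zeroR l F v g = \sum_(i <- l) F i v g.
Proof. by elim: l => /= [|i l ih]; rewrite ?big_nil ?big_cons ?ih. Qed.

Section RModules.
Variable M : lmodule R.

Lemma actR_zero m : lm_act M zeroR m = 0.
Proof. exact: (lm_act_zero memR0 addR0). Qed.

Lemma actR_prsum (I : Type) (s : seq I) (F : I -> pr_car R) m :
  (forall i, memR (F i)) -> lm_act M (prsum (P := R) zeroR s F) m = \sum_(i <- s) lm_act M (F i) m.
Proof. exact: (lm_act_prsum memR0 addR0 memRD). Qed.

Lemma act_sum_acts r (l : seq (pr_car R * M)) : memR r ->
  (forall p, List.In p l -> memR p.1) ->
  lm_act M r (\sum_(p <- l) lm_act M p.1 p.2) =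
  \sum_(p <- l) lm_act M (pr_mul R r p.1) p.2.
Proof.
move=> mr hl; rewrite (lm_act_sum _ _ mr); apply: eq_big_In => p pl.
by rewrite lm_mulA //; exact: hl.
Qed.

End RModules.

Lemma unital_supp (M : umodule R) (m : M) : exists l B,
  (forall p, List.In p l -> memR p.1 /\ supp_in p.1 B) /\
  m = \sum_(p <- l) lm_act M p.1 p.2.
Proof.
have [l [hl ->]] := um_unital m.
have [B hB] : exists B, forall t, List.In t (map fst l) -> supp_in t B.
  by apply: supp_in_seq => t /List.in_map_iff [p [<- pl]]; exact: hl.
exists l, B; split => // p pl; split; first exact: hl.
by apply: hB; apply: List.in_map.
Qed.

Definition Hsat (X : {fset G}) := [fset gmul h x | h in fset_set H, x in X]%fset.

Lemma Hsat_mul X h x : H h -> x \in X -> gmul h x \in Hsat X.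
Proof.
by move=> hh hx; apply/imfset2P; exists h; rewrite ?in_fsetH //; [apply/inHP | exists x].
Qed.

Lemma mem_Hsat X x : x \in X -> x \in Hsat X.
Proof. by move=> hx; rewrite -[x]gmul1l; apply: Hsat_mul => //; exact: groupH1. Qed.

Lemma Hsat_mull X h g : H h -> (gmul h g \in Hsat X) = (g \in Hsat X).
Proof.
move=> hh; apply/imfset2P/imfset2P => -[h' hh' [x hx ex]]; rewrite in_fsetH in hh'.
  exists (gmul (ginv h) h'); first by rewrite in_fsetH inHMl //; apply: groupHV.
  by exists x => //; rewrite -gmulA -ex gmulKl.
exists (gmul h h'); first by rewrite in_fsetH inHMl.
by exists x => //; rewrite ex gmulA.
Qed.

Definition unitR (X : {fset G}) : G -> G -> A :=
  fun u g => if (u == one) && (g \in Hsat X) then 1 else 0.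

Lemma memR_unitR X : memR (unitR X).
Proof.
apply: (@memR_indicator _ _ _ (Hsat X)) => [//|h g hh|h hh]; [exact: Hsat_mull | exact: act1].
Qed.

Lemma mul_unitR X Phi : (forall u g, Phi u g != 0 -> g \in Hsat X) ->
  pr_mul R (unitR X) Phi = Phi.
Proof.
move=> hP; apply: funext => u; apply: funext => g; rewrite mulRE (gsum1 (a := one)).
  rewrite /unitR eqxx ginv1 gmul1l gmul1r /=; case: ifP => hg; first by rewrite mul1r.
  by rewrite mul0r; case: (eqVneq (Phi u g) 0) => // /hP; rewrite hg.
by move=> s /negbTE ne; rewrite /unitR ne mul0r.
Qed.

Lemma mulR_unitR X Phi : (forall u g, Phi u g != 0 -> gmul g u \in Hsat X) ->
  pr_mul R Phi (unitR X) = Phi.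
Proof.
move=> hP; apply: funext => u; apply: funext => g; rewrite mulRE (gsum1 (a := u)).
  rewrite /unitR gmulVl eqxx /=; case: ifP => hg; first by rewrite mulr1.
  by rewrite mulr0; case: (eqVneq (Phi u g) 0) => // /hP; rewrite hg.
by move=> s ne; rewrite /unitR eq_ginvM1 eq_sym (negbTE ne) mulr0.
Qed.

Lemma local_units_smashG : has_local_units R.
Proof.
move=> T hT; have [K hK] := supp_in_seq hT.
exists (unitR (K `|` [fset gmul a b | a in K, b in K])%fset).
split; first exact: memR_unitR.
split.
  by apply: mul_unitR => u g; rewrite /unitR; case: ifP => [/andP[_ ->]//|]; rewrite eqxx.
move=> t tT; split.
  apply: mulR_unitR => u g /(supp_in_nz (hK t tT)) /andP[hu hg]; apply: mem_Hsat.
  by rewrite inE; apply/orP; right; apply/imfset2P; exists g => //; exists u.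
apply: mul_unitR => u g /(supp_in_nz (hK t tT)) /andP[hu hg]; apply: mem_Hsat.
by rewrite inE hg.
Qed.

(** * The corner e R e and the functor M |-> eM *)

Definition embS (x : G -> A) : G -> G -> A :=
  fun u g => if inH u && inH g then act g (x u) else 0.
Definition eR := embS (deltaH one).

Lemma memR_embS x : memR (embS x).
Proof.
apply: (@memR_intro _ (fset_set H)).
  by move=> s g; rewrite !in_fsetH /embS; case: (inH s); case: (inH g).
move=> s h g hh; rewrite /embS inHMl //; case hsg: (inH s && inH g); last exact: act0.
by case/andP: hsg => _ /inHP hg; rewrite actM.
Qed.

Lemma memR_eR : memR eR. Proof. exact: memR_embS. Qed.

Lemma embSD x y : embS (pr_add S x y) = pr_add R (embS x) (embS y).
Proof.
apply: funext => u; apply: funext => g; rewrite /embS /=.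
by case: ifP => [/andP[_ /inHP hg]|_]; [exact: actD | rewrite addr0].
Qed.

Lemma embSM x y : memS x -> memS y -> embS (pr_mul S x y) = pr_mul R (embS x) (embS y).
Proof.
move=> mx my; apply: funext => u; apply: funext => g; rewrite mulRE.
case hg: (inH g); last first.
  by rewrite /embS hg andbF; symmetry; apply: gsum0 => s; rewrite ?hg ?andbF mul0r.
case hu: (inH u); last first.
  rewrite /embS hu /=; symmetry; apply: gsum0 => s.
  case hs: (inH s); last by rewrite mul0r.
  by rewrite inHMl ?hu ?andFb ?mulr0 //; apply/groupHV/inH_H.
rewrite /embS hu hg /= sumH_gsum (@gsum_morph _ _ _ _ (fset_set H)).
- apply: eq_gsum => s; case hs: (inH s); rewrite /= ?mul0r ?act0 //; last exact/inH_H.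
  have hsH : H s by exact: inH_H.
  rewrite inHMl ?hu /=; last by rewrite groupHVE.
  rewrite inHMr // hg act_mul; last exact: inH_H.
  by rewrite actM //; exact: inH_H.
- exact/act0/inH_H.
- by move=> a b; apply/actD/inH_H.
- by move=> i; rewrite in_fsetH => /negbTE ->.
Qed.

Lemma eRE u g : eR u g = if (u == one) && inH g then 1 else 0.
Proof.
rewrite /eR /embS /deltaH /sH; case: eqP => [->|_]; rewrite ?andbF ?andbT.
  by rewrite inH1; case: ifP => // /inH_H; exact: act1.
by case: ifP => // /andP[_ /inH_H hg]; exact: act0.
Qed.

Lemma mul_eR Phi : (forall u g, ~~ inH g -> Phi u g = 0) -> pr_mul R eR Phi = Phi.
Proof.
move=> hPhi; apply: funext => u; apply: funext => g; rewrite mulRE (gsum1 (a := one)).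
  rewrite eRE eqxx ginv1 gmul1l gmul1r /=; case hg: (inH g); first by rewrite mul1r.
  by rewrite mul0r hPhi ?hg.
by move=> s /negbTE hs; rewrite eRE hs mul0r.
Qed.

Lemma mul_eR_embS x : pr_mul R eR (embS x) = embS x.
Proof. by apply: mul_eR => u g /negbTE hg; rewrite /embS hg andbF. Qed.

Lemma embS_embA0 : embS (embA 0) = zeroR.
Proof.
apply: funext => u; apply: funext => g; rewrite /embS /embA /sH.
by case: ifP => // /andP[_ /inH_H hg]; case: ifP => _; exact: act0.
Qed.

Section CornerModule.
Variable M : umodule R.

Definition eFixed : zmodPred M.
refine (@ZmodPred M (fun m => lm_act M eR m = m) _ _ _).
- exact: (lm_act0 _ memR_eR).
- by move=> x hx; rewrite (lm_actN _ memR_eR) hx.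
- by move=> x y hx hy; rewrite lm_actD ?hx ?hy //; exact: memR_eR.
Defined.

Lemma actE_fixed (x : pr_car S) (m : zsub eFixed) :
  lm_act M eR (lm_act M (embS x) (zval m)) = lm_act M (embS x) (zval m).
Proof. by rewrite -lm_mulA ?mul_eR_embS //; [exact: memR_eR | exact: memR_embS]. Qed.

Definition actE (x : pr_car S) (m : zsub eFixed) : zsub eFixed :=
  @ZSub _ eFixed (lm_act M (embS x) (zval m)) (actE_fixed x m).

Lemma actED x : pr_mem S x -> forall m n : zsub eFixed, actE x (m + n) = actE x m + actE x n.
Proof. by move=> _ m n; apply: zval_inj; rewrite /= lm_actD //; exact: memR_embS. Qed.

Lemma actE_addD x y : pr_mem S x -> pr_mem S y -> forall m : zsub eFixed,
  actE (pr_add S x y) m = actE x m + actE y m.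
Proof. by move=> _ _ m; apply: zval_inj; rewrite /= embSD lm_addD //; exact: memR_embS. Qed.

Lemma actE_mulA x y : pr_mem S x -> pr_mem S y -> forall m : zsub eFixed,
  actE (pr_mul S x y) m = actE x (actE y m).
Proof.
by move=> mx my m; apply: zval_inj; rewrite /= embSM // lm_mulA //; exact: memR_embS.
Qed.

Definition eLmod : lmodule S := LModule actED actE_addD actE_mulA.

Lemma eLmod_unital : unital_module eLmod.
Proof.
move=> m; exists [:: (deltaH one, m)]; split; first by move=> p [<-|[]]; exact/memS_deltaH/groupH1.
by rewrite big_cons big_nil addr0; apply: zval_inj; rewrite /= -[LHS](zvalP m).
Qed.

Definition eMod : umodule S := UModule eLmod_unital.

End CornerModule.

Section CornerMap.
Variables (M N : umodule R) (f : mhom M N).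

Lemma eMod_map_fixed (m : eMod M) : lm_act N eR (f (zval m)) = f (zval m).
Proof. by rewrite -mh_act ?(zvalP m) //; exact: memR_eR. Qed.

Definition eMod_fun (m : eMod M) : eMod N := @ZSub _ (eFixed N) (f (zval m)) (eMod_map_fixed m).

Lemma eMod_map_add x y : eMod_fun (x + y) = eMod_fun x + eMod_fun y.
Proof. by apply: zval_inj; rewrite /= mh_add. Qed.

Lemma eMod_map_act r : pr_mem S r ->
  forall x, eMod_fun (lm_act (eMod M) r x) = lm_act (eMod N) r (eMod_fun x).
Proof. by move=> _ x; apply: zval_inj; rewrite /= mh_act //; exact: memR_embS. Qed.

Definition eMod_map : mhom (eMod M) (eMod N) := MHom eMod_map_add eMod_map_act.

End CornerMap.

Lemma eMod_functor : is_functor eMod_map.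
Proof.
split; first by move=> M f hf y; apply: zval_inj; rewrite /= hf.
by move=> M N P f g h hfg y; apply: zval_inj; rewrite /= hfg.
Qed.

(** * The induction functor *)

Section Induction.
Variable N : umodule S.

Definition induced (xi : G -> N) : Prop :=
  finsupp xi /\ forall s h, H h -> xi (gmul s h) = lm_act N (deltaH (ginv h)) (xi s).

Definition inducedPred : zmodPred (G -> N).
refine (@ZmodPred (G -> N) induced _ _ _).
- split; first by exists fset0.
  by move=> s h hh; rewrite actS0 //; exact/memS_deltaH/groupHV.
- move=> x [[K hK] hx]; split.
    by exists K => i /hK hxi; rewrite opprfctE hxi oppr0.
  move=> s h hh; rewrite !opprfctE hx // lm_actN //; exact/memS_deltaH/groupHV.
- move=> x y [fx hx] [fy hy]; split; first exact: finsuppD.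
  move=> s h hh; rewrite !addrfctE hx // hy // lm_actD //; exact/memS_deltaH/groupHV.
Defined.

Definition actInd (Phi : G -> G -> A) (xi : G -> N) : G -> N :=
  fun t => gsum (fun u => lm_act N (embA (Phi u (ginv t))) (xi (gmul (ginv u) t))).

Lemma actInd_term0 Phi K (xi : G -> N) t : supp_in Phi K -> forall u, u \notin K ->
  lm_act N (embA (Phi u (ginv t))) (xi (gmul (ginv u) t)) = 0.
Proof. by move=> hK u hu; rewrite (supp_inS _ hK hu) act_embA0. Qed.

Lemma actInd_induced Phi xi : memR Phi -> induced xi -> induced (actInd Phi xi).
Proof.
move=> mP [fx hx]; have [K hK] := memR_supp mP; split.
  exists [fset ginv x | x in K]%fset => t ht; apply: gsum0 => u.
  rewrite (supp_inG _ hK) ?act_embA0 //; apply: contra ht => h.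
  by apply/imfsetP; exists (ginv t); rewrite ?ginvK.
move=> t h hh; rewrite /actInd (@gsum_morph _ _ _ _ K); first last.
- exact: actInd_term0 hK.
- by move=> a b; rewrite lm_actD //; exact/memS_deltaH/groupHV.
- exact/actS0/memS_deltaH/groupHV.
apply: eq_gsum => u.
rewrite gmulA hx // ginvM -(memR_act _ _ mP); last exact: groupHV.
rewrite -!lm_mulA; try exact/memS_deltaH/groupHV; try exact: memS_embA.
congr (lm_act N _ _).
by rewrite /embA /deltaH !mulS_sH ?act_unit ?mulr1 ?mul1r ?gmul1l ?gmul1r //;
  try exact: groupH1; exact: groupHV.
Qed.

Definition actIndZ (Phi : pr_car R) (xi : zsub inducedPred) : zsub inducedPred :=
  match pselect (memR Phi) with
  | left mP => @ZSub _ inducedPred (actInd Phi (zval xi)) (actInd_induced mP (zvalP xi))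
  | right _ => 0
  end.

Lemma actIndZE Phi xi : memR Phi -> zval (actIndZ Phi xi) = actInd Phi (zval xi).
Proof. by rewrite /actIndZ; case: pselect. Qed.

Lemma actIndD Phi : pr_mem R Phi -> forall m n : zsub inducedPred,
  actIndZ Phi (m + n) = actIndZ Phi m + actIndZ Phi n.
Proof.
move=> mP m n; apply: zval_inj; rewrite /= !actIndZE //.
have [K hK] := memR_supp mP; apply: funext => t; rewrite !addrfctE /actInd.
rewrite -(@gsumD _ _ K); try exact: actInd_term0 hK.
by apply: eq_gsum => u; rewrite lm_actD //; exact: memS_embA.
Qed.

Lemma actInd_addD Phi Psi : pr_mem R Phi -> pr_mem R Psi -> forall m : zsub inducedPred,
  actIndZ (pr_add R Phi Psi) m = actIndZ Phi m + actIndZ Psi m.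
Proof.
move=> mP mQ m; apply: zval_inj; rewrite /= !actIndZE //; last exact: memRD.
have [K hK] := memR_supp mP; have [K' hK'] := memR_supp mQ.
apply: funext => t; rewrite !addrfctE /actInd.
rewrite -(@gsumD _ _ (K `|` K')%fset); first last.
- by move=> u; rewrite inE negb_or => /andP[_ hu]; exact: actInd_term0 hK' u hu.
- by move=> u; rewrite inE negb_or => /andP[hu _]; exact: actInd_term0 hK u hu.
by apply: eq_gsum => u; rewrite /= embAD lm_addD //; exact: memS_embA.
Qed.

Lemma actInd_mulA Phi Psi (xi : G -> N) : memR Phi -> memR Psi ->
  actInd (pr_mul R Phi Psi) xi = actInd Phi (actInd Psi xi).
Proof.
move=> mP mQ; have [K hK] := memR_supp mP; have [K' hK'] := memR_supp mQ.
apply: funext => t.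
pose T s u := lm_act N (embA (Phi s (ginv t) * Psi (gmul (ginv s) u) (gmul (ginv t) s)))
  (xi (gmul (ginv u) t)).
have T0 s u : s \notin K -> T s u = 0.
  by move=> hs; rewrite /T (supp_inS _ hK hs) mul0r act_embA0.
transitivity (gsum (fun u => gsum (fun s => T s u))).
  rewrite /actInd; apply: eq_gsum => u; rewrite mulRE (@gsum_fset _ _ K); last first.
    by move=> s hs; rewrite (supp_inS _ hK hs) mul0r.
  by rewrite act_embA_sum; symmetry; apply: gsum_fset => s hs; exact: T0.
transitivity (gsum (fun s => gsum (fun u => T s u))); last first.
  rewrite /actInd; apply: eq_gsum => s.
  rewrite (@gsum_morph _ _ _ (lm_act N (embA (Phi s (ginv t)))) K'); first last.
  - by move=> v hv; rewrite (supp_inS _ hK' hv) act_embA0.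
  - by move=> a b; rewrite lm_actD //; exact: memS_embA.
  - exact/actS0/memS_embA.
  rewrite [RHS](gsum_mull (ginv s)); apply: eq_gsum => u.
  rewrite -lm_mulA ?embAM; try exact: memS_embA.
  by rewrite /T !ginvM !ginvK -gmulA gmulKVl.
apply: (@exchange_gsum _ _ [fset gmul a b | a in K, b in K']%fset K (fun u s => T s u)).
  move=> u s hu; case: (boolP (s \in K)) => hs; last exact: T0.
  rewrite /T (supp_inS _ hK'); first by rewrite mulr0 act_embA0.
  apply: contra hu => hv; apply/imfset2P; exists s => //; exists (gmul (ginv s) u) => //.
  by rewrite gmulKVl.
by move=> u s hs; exact: T0.
Qed.

Definition indLmod : lmodule R.
refine (@LModule R (zsub inducedPred) actIndZ actIndD actInd_addD _).
move=> Phi Psi mP mQ m; apply: zval_inj.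
rewrite (actIndZE _ (memRM mP mQ)) actInd_mulA //.
by rewrite (actIndZE _ mP) (actIndZE _ mQ).
Defined.

Lemma indLmod_unital : unital_module indLmod.
Proof.
move=> xi; have [[Kx hKx] _] := zvalP xi.
pose X := [fset ginv t | t in Kx]%fset.
exists [:: (unitR X, xi)]; split; first by move=> p [<-|[]]; exact: memR_unitR.
rewrite big_cons big_nil addr0; apply: zval_inj; rewrite /= actIndZE; last exact: memR_unitR.
apply: funext => t; rewrite /actInd (gsum1 (a := one)); last first.
  by move=> u /negbTE ne; rewrite /unitR ne /= act_embA0.
rewrite /unitR eqxx /= ginv1 gmul1l; case: ifP => hX; first by rewrite act_delta1.
rewrite act_embA0; case: (boolP (t \in Kx)) => ht; last by rewrite hKx.
by move: hX; rewrite mem_Hsat //; apply/imfsetP; exists t.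
Qed.

Definition indMod : umodule R := UModule indLmod_unital.

End Induction.

Section InductionMap.
Variables (N N' : umodule S) (f : mhom N N').

Lemma indMod_map_induced (xi : indMod N) : induced (fun t => f (zval xi t)).
Proof.
have [[K hK] hx] := zvalP xi; split; first by exists K => i /hK ->; exact: mh0.
by move=> s h hh; rewrite hx // mh_act //; exact/memS_deltaH/groupHV.
Qed.

Definition indMod_fun (xi : indMod N) : indMod N' := @ZSub _ (inducedPred N') _ (indMod_map_induced xi).

Lemma indMod_map_add x y : indMod_fun (x + y) = indMod_fun x + indMod_fun y.
Proof. by apply: zval_inj; apply: funext => t; rewrite /= !addrfctE mh_add. Qed.

Lemma indMod_map_act r : pr_mem R r ->
  forall x, indMod_fun (lm_act (indMod N) r x) = lm_act (indMod N') r (indMod_fun x).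
Proof.
move=> mr x; apply: zval_inj; rewrite /= !actIndZE //.
apply: funext => t; rewrite /actInd; have [K hK] := memR_supp mr.
rewrite (@gsum_morph _ _ _ f K); first last.
- exact: actInd_term0 hK.
- exact: mh_add.
- exact: mh0.
by apply: eq_gsum => u; rewrite mh_act //; exact: memS_embA.
Qed.

Definition indMod_map : mhom (indMod N) (indMod N') := MHom indMod_map_add indMod_map_act.

End InductionMap.

Lemma indMod_functor : is_functor indMod_map.
Proof.
split; first by move=> M f hf y; apply: zval_inj; apply: funext => t /=; rewrite hf.
by move=> M N P f g h hfg y; apply: zval_inj; apply: funext => t /=; rewrite hfg.
Qed.

(** * The isomorphism ind(eM) ~= M *)

Definition nH := size (enum_fset (fset_set H)).

Lemma count_coset (X : {fset G}) a : (forall h, H h -> gmul a h \in X) ->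
  count (fun t => inH (gmul (ginv a) t)) X = nH.
Proof.
move=> hX; rewrite -size_filter /nH -(size_map (gmul a) (enum_fset (fset_set H))).
apply: perm_size; apply: uniq_perm.
- exact/filter_uniq/fset_uniq.
- by rewrite map_inj_uniq ?fset_uniq // => x y /gmulIl.
move=> t; rewrite mem_filter; apply/andP/mapP.
  by move=> [hp _]; exists (gmul (ginv a) t); rewrite ?in_fsetH ?gmulKVl.
move=> [h hh ->]; rewrite in_fsetH in hh; rewrite gmulKl hh; split => //.
exact/hX/inH_H.
Qed.

Lemma nH_gt0 : (0 < nH)%N.
Proof.
rewrite /nH; case e: (enum_fset (fset_set H)) => //.
have : one \in fset_set H by rewrite in_fsetH inH1.
by rewrite -[_ \in _]/(one \in enum_fset (fset_set H)) e.
Qed.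

Definition cH : CC := (nH%:R)^-1.

Lemma cH1_nH : (cH *: (1 : A)) *+ nH = 1.
Proof.
have nH_neq0 : (nH%:R : CC) != 0.
  (* [CC] is declared as a bare field; the order lives on [complex R]. *)
  have : (nH%:R : complex Rdefinitions.R) != 0 by rewrite Num.Theory.pnatr_eq0 -lt0n nH_gt0.
  by [].
by rewrite scalerMnl /cH -(mulr_natr ((nH%:R : CC)^-1)) mulVf ?scale1r.
Qed.

Lemma act_cH1 h : H h -> act h (cH *: (1 : A)) = cH *: 1.
Proof. by move=> hh; rewrite actZ // act1. Qed.

(* [liftR t] = |H|^-1 [g in H t^-1] # t and [projR t] = [g in H] # t^-1. *)
Definition liftR t : G -> G -> A :=
  fun u g => if (u == t) && inH (gmul g t) then cH *: (1 : A) else 0.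
Definition projR t : G -> G -> A := fun u g => if (u == ginv t) && inH g then 1 else 0.
Definition avgR k : G -> G -> A := fun u g => if (u == k) && inH g then cH *: (1 : A) else 0.

Lemma memR_liftR t : memR (liftR t).
Proof.
apply: (@memR_indicator _ _ _ [fset gmul h (ginv t) | h in fset_set H]%fset).
- by move=> g hg; apply/imfsetP; exists (gmul g t); rewrite ?in_fsetH ?gmulKr.
- by move=> h g hh; rewrite -gmulA inHMl.
- exact: act_cH1.
Qed.

Lemma memR_projR t : memR (projR t).
Proof.
apply: (@memR_indicator _ _ _ (fset_set H)).
- by move=> g; rewrite in_fsetH.
- by move=> h g hh; rewrite inHMl.
- exact: act1.
Qed.

Lemma memR_avgR k : memR (avgR k).
Proof.
apply: (@memR_indicator _ _ _ (fset_set H)).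
- by move=> g; rewrite in_fsetH.
- by move=> h g hh; rewrite inHMl.
- exact: act_cH1.
Qed.

Lemma liftR_embS Phi u t : memR Phi ->
  pr_mul R (liftR t) (embS (embA (Phi u (ginv t)))) =
  fun v g => if (v == t) && inH (gmul g t) then cH *: Phi u g else 0.
Proof.
move=> mP; apply: funext => v; apply: funext => g; rewrite mulRE (gsum1 (a := t)); last first.
  by move=> w /negbTE ne; rewrite /liftR ne mul0r.
rewrite /liftR eqxx /=; case hg: (inH (gmul g t)); last by rewrite mul0r andbF.
rewrite andbT /embS /embA /sH eq_ginvM1 hg andbT.
case: (eqVneq v t) => [->|ne] /=.
  by rewrite gmulVl inH1 (memR_act _ _ mP (inH_H hg)) gmulKr -scalerAl mul1r.
by case: ifP => _; rewrite ?act0 ?mulr0 //; exact: inH_H.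
Qed.

Lemma mulR_liftR Phi s : pr_mul R Phi (liftR s) =
  fun v g => if inH (gmul g v) then cH *: Phi (gmul v (ginv s)) g else 0.
Proof.
apply: funext => v; apply: funext => g.
rewrite mulRE (gsum1 (a := gmul v (ginv s))); last first.
  move=> w ne; rewrite /liftR; case: eqP => [e1|_]; last by rewrite mulr0.
  by move: ne; rewrite -e1 ginvM ginvK gmulKVl eqxx.
rewrite /liftR ginvM ginvK gmulKVr eqxx /= -gmulA gmulKVr.
by case: ifP; rewrite ?mulr0 // -scalerAr mulr1.
Qed.

Lemma liftR_projR t : pr_mul R (liftR t) (projR t) =
  fun u g => if (u == one) && inH (gmul g t) then cH *: (1 : A) else 0.
Proof.
apply: funext => u; apply: funext => g; rewrite mulRE (gsum1 (a := t)); last first.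
  by move=> w /negbTE ne; rewrite /liftR ne mul0r.
rewrite /liftR /projR eqxx /=; case hg: (inH (gmul g t)); rewrite ?andbF ?mul0r //.
rewrite !andbT eq_gmulVl gmulVr.
by case: ifP; rewrite ?mulr1 ?mulr0.
Qed.

Lemma projR_liftR t s : pr_mul R (projR t) (liftR s) =
  fun u g => if (u == gmul (ginv t) s) && inH g && inH (gmul (ginv t) s)
             then cH *: (1 : A) else 0.
Proof.
apply: funext => u; apply: funext => g; rewrite mulRE (gsum1 (a := ginv t)); last first.
  by move=> w /negbTE ne; rewrite /projR ne mul0r.
rewrite /projR /liftR eqxx /= ginvK; case hg: (inH g); rewrite ?mul0r ?andbF //= mul1r.
by rewrite eq_gmull -gmulA inHMl ?andbT //; exact: inH_H.
Qed.

Lemma avgR_embS k : H k -> pr_mul R (avgR k) (embS (deltaH (ginv k))) = avgR one.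
Proof.
move=> hk; apply: funext => u; apply: funext => g; rewrite mulRE (gsum1 (a := k)); last first.
  by move=> w /negbTE ne; rewrite /avgR ne mul0r.
rewrite /avgR /embS /deltaH /sH eqxx /=; case hg: (inH g); rewrite ?mul0r ?andbF //.
rewrite eq_gmulVl gmulVr.
case: (eqVneq u one) => [->|ne] /=.
  rewrite gmul1r inHV inHMr // hg (_ : inH k = true) /=; last exact/inHP.
  by rewrite act1 ?mulr1 //; apply: groupHM => //; exact: inH_H.
by case: ifP => [/andP[_ /inH_H hgk]|_]; rewrite ?act0 ?mulr0.
Qed.

Lemma embS_projR k s : H k -> pr_mul R (embS (deltaH k)) (projR s) = projR (gmul s (ginv k)).
Proof.
move=> hk; apply: funext => u; apply: funext => g; rewrite mulRE (gsum1 (a := k)); last first.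
  move=> w ne; rewrite /embS /deltaH /sH (negbTE ne).
  by case: ifP; rewrite ?mul0r // => /andP[_ /inH_H hg]; rewrite act0 // mul0r.
rewrite /embS /deltaH /sH /projR eqxx (_ : inH k = true); last exact/inHP.
case hg: (inH g) => /=; last by rewrite mul0r andbF.
rewrite act1; last exact: inH_H.
by rewrite mul1r inHMr // hg !andbT ginvM ginvK eq_gmulVl.
Qed.

Lemma eR_projR t : pr_mul R eR (projR t) = projR t.
Proof. by apply: mul_eR => u g /negbTE hg; rewrite /projR hg andbF. Qed.

Lemma projR_supp0 x B t : supp_in x B -> ginv t \notin Hsat B -> pr_mul R (projR t) x = zeroR.
Proof.
move=> hB ht; apply: funext => u; apply: funext => g; rewrite mulRE (gsum1 (a := ginv t)).
  rewrite /projR eqxx /=; case hg: (inH g); last by rewrite mul0r.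
  rewrite (supp_inG _ hB) ?mulr0 //; apply: contra ht => hgB.
  by rewrite -(Hsat_mull _ _ (inH_H hg)); apply: mem_Hsat.
by move=> w /negbTE ne; rewrite /projR ne mul0r.
Qed.

Definition invHsat (B : {fset G}) := [fset ginv y | y in Hsat B]%fset.

Lemma notin_invHsat B t : t \notin invHsat B -> ginv t \notin Hsat B.
Proof. by apply: contra => h; apply/imfsetP; exists (ginv t); rewrite ?ginvK. Qed.

(* Summing [liftR t * projR t] over t gives |H| |H|^-1 = 1 on every g in H B. *)
Lemma prsum_liftR_projR x B :
  supp_in x B ->
  pr_mul R (prsum (P := R) zeroR (invHsat B) (fun t => pr_mul R (liftR t) (projR t))) x = x.
Proof.
move=> hB; apply: funext => u; apply: funext => g.
rewrite mulRE (gsum1 (a := one)); last first.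
  move=> w /negbTE ne; rewrite prsumRE big1 ?mul0r // => i _.
  by rewrite liftR_projR ne.
rewrite ginv1 gmul1l gmul1r prsumRE.
case: (eqVneq (x u g) 0) => [->|nz]; first by rewrite mulr0.
have /andP[_ gB] := supp_in_nz hB nz.
rewrite (eq_bigr (fun t => if inH (gmul g t) then cH *: (1 : A) else 0)); last first.
  by move=> t _; rewrite liftR_projR eqxx.
rewrite sumr_if_const.
have -> : count (fun t => inH (gmul g t)) (invHsat B) = nH.
  rewrite -(@count_coset (invHsat B) (ginv g)); first by apply: eq_count => t; rewrite ginvK.
  move=> h hh; apply/imfsetP; exists (gmul (ginv h) g); last by rewrite ginvM ginvK.
  by apply: Hsat_mul => //; exact: groupHV.
by rewrite cH1_nH mul1r.
Qed.

Lemma prsum_avgR1 : prsum (P := R) zeroR (index_iota 0 nH) (fun _ => avgR one) = eR.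
Proof.
apply: funext => u; apply: funext => g.
rewrite prsumRE sumr_const_nat subn0 eRE /avgR.
by case: ifP; rewrite ?cH1_nH ?mul0rn.
Qed.

Section Counit.
Variable M : umodule R.

Definition fam (xi : indMod (eMod M)) t : M := zval (zval xi t).

Lemma fam_supp (xi : indMod (eMod M)) : exists K : {fset G}, forall t, t \notin K -> fam xi t = 0.
Proof. by have [[K hK] _] := zvalP xi; exists K => t /hK; rewrite /fam => ->. Qed.

Lemma fam_mulr (xi : indMod (eMod M)) t k : H k ->
  fam xi (gmul t k) = lm_act M (embS (deltaH (ginv k))) (fam xi t).
Proof. by move=> hk; have [_ hx] := zvalP xi; rewrite /fam (hx t k hk). Qed.

Lemma fam_eR (xi : indMod (eMod M)) t : lm_act M eR (fam xi t) = fam xi t.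
Proof. exact: (zvalP (zval xi t)). Qed.

Definition counit_fun (xi : indMod (eMod M)) : M := gsum (fun t => lm_act M (liftR t) (fam xi t)).

Lemma counit_add x y : counit_fun (x + y) = counit_fun x + counit_fun y.
Proof.
have [K hK] := fam_supp x; have [K' hK'] := fam_supp y.
rewrite /counit_fun -(@gsumD _ _ (K `|` K')%fset); first last.
- by move=> t; rewrite inE negb_or => /andP[_ /hK' ->]; rewrite (lm_act0 _ (memR_liftR t)).
- by move=> t; rewrite inE negb_or => /andP[/hK -> _]; rewrite (lm_act0 _ (memR_liftR t)).
by apply: eq_gsum => t; rewrite -lm_actD //; exact: memR_liftR.
Qed.

Lemma fam_act Phi xi t : memR Phi ->
  fam (lm_act (indMod (eMod M)) Phi xi) t =
  gsum (fun u => lm_act M (embS (embA (Phi u (ginv t)))) (fam xi (gmul (ginv u) t))).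
Proof.
move=> mP; have [K hK] := memR_supp mP.
rewrite /fam actIndZE // /actInd (gsum_fset (K := K)); last exact: actInd_term0 hK.
rewrite zval_sum; symmetry; apply: gsum_fset => u hu.
by rewrite (supp_inS _ hK hu) embS_embA0 actR_zero.
Qed.

(* The ring element acting on xi(u^-1 t) in the (t, u) summand of
   [counit_fun (Phi xi)]; cf. [liftR_embS]. *)
Definition liftcoef (Phi : G -> G -> A) t u : G -> G -> A :=
  fun v g => if (v == t) && inH (gmul g t) then cH *: Phi u g else 0.

Lemma memR_liftcoef Phi t u : memR Phi -> memR (liftcoef Phi t u).
Proof.
by move=> mP; rewrite /liftcoef -liftR_embS //; apply: memRM; [exact: memR_liftR | exact: memR_embS].
Qed.

Lemma liftcoef0 Phi K t u : supp_in Phi K -> u \notin K -> liftcoef Phi t u = zeroR.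
Proof.
move=> hK hu; apply: funext => v; apply: funext => g.
by rewrite /liftcoef (supp_inS _ hK hu) scaler0; case: ifP.
Qed.

Lemma mulR_liftR_sum Phi K s : supp_in Phi K ->
  prsum (P := R) zeroR K (fun u => liftcoef Phi (gmul u s) u) = pr_mul R Phi (liftR s).
Proof.
move=> hK; rewrite mulR_liftR; apply: funext => v; apply: funext => g; rewrite prsumRE.
rewrite -(@gsum_fset _ _ K); last first.
  by move=> u hu; rewrite /liftcoef (supp_inS _ hK hu) scaler0; case: ifP.
rewrite (gsum1 (a := gmul v (ginv s))) /liftcoef ?gmulKVr ?eqxx //.
by move=> u ne; case: eqP => // e1; move: ne; rewrite e1 gmulKr eqxx.
Qed.

Lemma counit_act_sum Phi xi : memR Phi -> exists K Kx : {fset G},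
  supp_in Phi K /\ (forall t, t \notin Kx -> fam xi t = 0) /\
  counit_fun (lm_act (indMod (eMod M)) Phi xi) =
  gsum (fun u => gsum (fun s => lm_act M (liftcoef Phi (gmul u s) u) (fam xi s))).
Proof.
move=> mP; have [K hK] := memR_supp mP; have [Kx hKx] := fam_supp xi.
exists K, Kx; split=> //; split=> //.
pose T t u := lm_act M (liftcoef Phi t u) (fam xi (gmul (ginv u) t)).
have Tu t u : u \notin K -> T t u = 0.
  by move=> hu; rewrite /T (liftcoef0 _ hK hu) actR_zero.
transitivity (gsum (fun t => gsum (fun u => T t u))).
  rewrite /counit_fun; apply: eq_gsum => t; rewrite fam_act //.
  rewrite (@gsum_morph _ _ _ (lm_act M (liftR t)) K); first last.
  - by move=> u hu; rewrite (supp_inS _ hK hu) embS_embA0 actR_zero.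
  - by move=> a b; rewrite lm_actD //; exact: memR_liftR.
  - exact: lm_act0 (memR_liftR t).
  apply: eq_gsum => u; rewrite -lm_mulA; [|exact: memR_liftR | exact: memR_embS].
  by rewrite liftR_embS.
rewrite (@exchange_gsum _ _ [fset gmul a b | a in K, b in Kx]%fset K (fun t u => T t u)).
- apply: eq_gsum => u; rewrite (gsum_mull u); apply: eq_gsum => s.
  by rewrite /T gmulKl.
- move=> t u ht; case: (boolP (u \in K)) => hu; last exact: Tu.
  rewrite /T hKx ?(lm_act0 _ (memR_liftcoef _ _ mP)) //.
  apply: contra ht => hs; apply/imfset2P; exists u => //; exists (gmul (ginv u) t) => //.
  by rewrite gmulKVl.
- by move=> t u hu; exact: Tu.
Qed.

Lemma counit_act Phi : memR Phi ->
  forall xi, counit_fun (lm_act (indMod (eMod M)) Phi xi) = lm_act M Phi (counit_fun xi).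
Proof.
move=> mP xi; have [K [Kx [hK [hKx ->]]]] := counit_act_sum xi mP.
rewrite (@exchange_gsum _ _ K Kx); first last.
- by move=> u s hs; rewrite hKx // (lm_act0 _ (memR_liftcoef _ _ mP)).
- by move=> u s hu; rewrite (liftcoef0 _ hK hu) actR_zero.
rewrite /counit_fun (@gsum_morph _ _ _ (lm_act M Phi) Kx); first last.
- by move=> s hs; rewrite hKx // (lm_act0 _ (memR_liftR s)).
- by move=> a b; rewrite lm_actD.
- exact: lm_act0.
apply: eq_gsum => s; rewrite -lm_mulA //; last exact: memR_liftR.
rewrite -(mulR_liftR_sum s hK) actR_prsum; last by move=> u; exact: memR_liftcoef.
by apply: gsum_fset => u hu; rewrite (liftcoef0 _ hK hu) actR_zero.
Qed.

Definition counit_hom : mhom (indMod (eMod M)) M := MHom counit_add counit_act.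

Lemma projR_fixed (m : M) t : lm_act M eR (lm_act M (projR t) m) = lm_act M (projR t) m.
Proof. by rewrite -lm_mulA ?eR_projR //; [exact: memR_eR | exact: memR_projR]. Qed.

Definition projE (m : M) t : eMod M := @ZSub _ (eFixed M) (lm_act M (projR t) m) (projR_fixed m t).

Lemma projR_act_supp (m : M) :
  exists B, forall t, t \notin invHsat B -> lm_act M (projR t) m = 0.
Proof.
have [l [B [hl ->]]] := unital_supp m; exists B => t ht.
rewrite act_sum_acts; [|exact: memR_projR | by move=> p /hl []].
rewrite (@eq_big_In _ _ l _ (fun _ => 0)) ?big1 // => p /hl [_ bp].
by rewrite (projR_supp0 bp (notin_invHsat ht)) actR_zero.
Qed.

Lemma projE_induced (m : M) : induced (fun t => projE m t).
Proof.
split.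
  by have [B hB] := projR_act_supp m; exists (invHsat B) => t ht; apply: zval_inj; exact: hB.
move=> s h hh; apply: zval_inj => /=.
rewrite -lm_mulA; [|exact: memR_embS | exact: memR_projR].
by rewrite embS_projR ?ginvK //; exact: groupHV.
Qed.

Definition counit_inv (m : M) : indMod (eMod M) := @ZSub _ (inducedPred (eMod M)) _ (projE_induced m).

Lemma counit_invK m : counit_fun (counit_inv m) = m.
Proof.
have [l [B [hl em]]] := unital_supp m.
have hl1 p : List.In p l -> memR p.1 by move/hl => [].
have mLP t : memR (pr_mul R (liftR t) (projR t)) by apply: memRM; [exact: memR_liftR | exact: memR_projR].
rewrite /counit_fun /fam /= (@gsum_fset _ _ (invHsat B)); last first.
  move=> t ht; rewrite em act_sum_acts //; last exact: memR_projR.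
  rewrite (@eq_big_In _ _ l _ (fun _ => 0)) ?big1 ?(lm_act0 _ (memR_liftR t)) //.
  by move=> p pl; have [mp bp] := hl p pl; rewrite (projR_supp0 bp (notin_invHsat ht)) actR_zero.
transitivity (lm_act M (prsum (P := R) zeroR (invHsat B) (fun t => pr_mul R (liftR t) (projR t))) m).
  rewrite actR_prsum //; apply: eq_bigr => t _.
  by rewrite -lm_mulA //; [exact: memR_liftR | exact: memR_projR].
have mZ := prsum_mem memR0 memRD (invHsat B) mLP.
rewrite {1}em act_sum_acts // [RHS]em; apply: eq_big_In => p pl.
by have [mp bp] := hl p pl; rewrite prsum_liftR_projR.
Qed.

Lemma projR_counit_term t s (m : M) : lm_act M eR m = m ->
  lm_act M (projR t) (lm_act M (liftR s) m) =
  if inH (gmul (ginv t) s) then lm_act M (avgR (gmul (ginv t) s)) m else 0.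
Proof.
move=> me; rewrite -lm_mulA; [|exact: memR_projR | exact: memR_liftR].
rewrite projR_liftR; case hk: (inH (gmul (ginv t) s)).
  by congr (lm_act M _ m); apply: funext => u; apply: funext => g; rewrite andbT.
rewrite (_ : (fun _ _ => _) = zeroR) ?actR_zero //.
by apply: funext => u; apply: funext => g; rewrite andbF.
Qed.

Lemma counit_funK xi : counit_inv (counit_fun xi) = xi.
Proof.
apply: zval_inj; apply: funext => t; apply: zval_inj => /=.
have [Kx hKx] := fam_supp xi.
rewrite /counit_fun (@gsum_morph _ _ _ (lm_act M (projR t)) Kx); first last.
- by move=> s hs; rewrite hKx // (lm_act0 _ (memR_liftR s)).
- by move=> a b; rewrite lm_actD //; exact: memR_projR.
- exact: lm_act0 (memR_projR t).
rewrite (@gsum_fset _ _ Kx); last first.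
  by move=> s hs; rewrite hKx // !(lm_act0 _ (memR_liftR s)) (lm_act0 _ (memR_projR t)).
rewrite (eq_bigr (fun s => if inH (gmul (ginv t) s) then lm_act M (avgR one) (fam xi t) else 0)).
  rewrite sumr_if_const -[zval (zval xi t)]/(fam xi t).
  case: (eqVneq (fam xi t) 0) => [->|nz]; first by rewrite (lm_act0 _ (memR_avgR one)) mul0rn.
  rewrite (@count_coset Kx t); last first.
    move=> h hh; apply: contraT => /hKx h0; move: nz.
    by rewrite -(gmulKr h t) fam_mulr ?ginvK ?h0 ?(lm_act0 _ (memR_embS _)) ?eqxx //; exact: groupHV.
  rewrite -(subn0 nH) -sumr_const_nat -(@actR_prsum M _ _ (fun _ => avgR one)); last first.
    by move=> _; exact: memR_avgR.
  by rewrite prsum_avgR1 fam_eR.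
move=> s _; rewrite projR_counit_term ?fam_eR //; case: ifP => // /inH_H hk.
rewrite -{2}(gmulKVl t s) fam_mulr // -lm_mulA ?avgR_embS //.
  exact: memR_avgR.
exact: memR_embS.
Qed.

Lemma counit_bij : bijective counit_hom.
Proof. by exists counit_inv; [exact: counit_funK | exact: counit_invK]. Qed.

End Counit.

Lemma counit_natural (M N : umodule R) (f : mhom M N) x :
  f (counit_hom M x) = counit_hom N (indMod_map (eMod_map f) x).
Proof.
rewrite /= /counit_fun; have [Kx hKx] := fam_supp x.
rewrite (@gsum_morph _ _ _ f Kx); first last.
- by move=> t ht; rewrite hKx // (lm_act0 _ (memR_liftR t)).
- exact: mh_add.
- exact: mh0.
by apply: eq_gsum => t; rewrite mh_act //; exact: memR_liftR.
Qed.

(** * The isomorphism e(ind N) ~= N *)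

Section Eval1.
Variable N : umodule S.

Definition fval (z : eMod (indMod N)) : G -> N := zval (zval z).

Lemma actInd_eR (xi : G -> N) t :
  actInd eR xi t = if inH t then lm_act N (deltaH one) (xi t) else 0.
Proof.
rewrite /actInd (gsum1 (a := one)); last by move=> u /negbTE ne; rewrite eRE ne /= act_embA0.
by rewrite eRE eqxx /= ginv1 gmul1l inHV; case: ifP => _; last exact: act_embA0.
Qed.

Lemma fval_out (z : eMod (indMod N)) t : ~~ inH t -> fval z t = 0.
Proof.
move=> /negbTE ht; have hz := zvalP z; rewrite /fval -{1}hz.
have -> : zval (lm_act (indMod N) eR (zval z)) = actInd eR (zval (zval z)).
  exact: actIndZE memR_eR.
by rewrite actInd_eR ht.
Qed.

Lemma fval_inH (z : eMod (indMod N)) s :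
  inH s -> fval z s = lm_act N (deltaH (ginv s)) (fval z one).
Proof. by move=> hs; have [_ hx] := zvalP (zval z); rewrite /fval -(hx one s (inH_H hs)) gmul1l. Qed.

Definition eval1 (z : eMod (indMod N)) : N := fval z one.

Lemma eval1_add x y : eval1 (x + y) = eval1 x + eval1 y. Proof. by []. Qed.

Lemma eval1_act r : pr_mem S r ->
  forall z, eval1 (lm_act (eMod (indMod N)) r z) = lm_act N r (eval1 z).
Proof.
move=> mr z; rewrite /eval1 /fval /=.
have -> : zval (lm_act (indMod N) (embS r) (zval z)) = actInd (embS r) (zval (zval z)).
  exact: actIndZE (memR_embS r).
rewrite /actInd ginv1.
rewrite (eq_gsum (F' := fun u => if inH u then lm_act N (sH (r u) u) (fval z one) else 0)).
  rewrite gsum_fsetH; last by move=> u /negbTE ->.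
  pose F u := if inH u then sH (r u) u else zeroS.
  rewrite (eq_big_seq (fun u => lm_act N (F u) (fval z one))); last first.
    by move=> u; rewrite in_fsetH /F => ->.
  rewrite -(lm_act_prsum memS0 addS0 memSD); last first.
    by move=> u; rewrite /F; case: ifP => // /inH_H hu; exact: memS_sH.
  congr (lm_act N _ _); apply: funext => v; rewrite prsumSE.
  rewrite -gsum_fsetH; last by move=> u; rewrite /F => /negbTE ->.
  rewrite (gsum1 (a := v)) /F /sH; last first.
    by move=> u ne; case: ifP => _ //=; rewrite eq_sym (negbTE ne).
  case: ifP => [_|/negbT hv] /=; first by rewrite eqxx.
  by rewrite /zeroS mr // => /inHP hv'; rewrite hv' in hv.
move=> u; rewrite /embS inH1 andbT; case hu: (inH u); last exact: act_embA0.
rewrite act_unit gmul1r -/(fval z (ginv u)) fval_inH ?inHV // ginvK.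
rewrite -lm_mulA; [|exact: memS_embA | exact: memS_deltaH (inH_H hu)].
by rewrite /embA /deltaH mulS_sH ?act_unit ?mulr1 ?gmul1l //; [exact: groupH1 | exact: inH_H].
Qed.

Definition eval1_hom : mhom (eMod (indMod N)) N := MHom eval1_add eval1_act.

Definition orbit_fam (n : N) : G -> N :=
  fun s => if inH s then lm_act N (deltaH (ginv s)) n else 0.

Lemma orbit_fam_induced n : induced (orbit_fam n).
Proof.
split; first by exists (fset_set H) => s; rewrite in_fsetH /orbit_fam => /negbTE ->.
move=> s h hh; rewrite /orbit_fam inHMr //; case hs: (inH s); last first.
  exact/esym/actS0/memS_deltaH/groupHV.
have hs' := groupHV (inH_H hs).
rewrite -lm_mulA; [|exact: memS_deltaH (groupHV hh) | exact: memS_deltaH hs'].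
by rewrite /deltaH mulS_sH ?act1 ?mulr1 ?ginvM //; exact: groupHV.
Qed.

Definition orbitInd (n : N) : indMod N := @ZSub _ (inducedPred N) _ (orbit_fam_induced n).

Lemma orbitInd_fixed n : lm_act (indMod N) eR (orbitInd n) = orbitInd n.
Proof.
apply: zval_inj.
have -> : zval (lm_act (indMod N) eR (orbitInd n)) = actInd eR (orbit_fam n).
  exact: actIndZE memR_eR.
apply: funext => t; rewrite actInd_eR /= /orbit_fam; case hs: (inH t) => //.
have ht := memS_deltaH (groupHV (inH_H hs)).
by rewrite -lm_mulA ?mulS_delta1l //; exact: memS_deltaH groupH1.
Qed.

Definition eval1_inv (n : N) : eMod (indMod N) := @ZSub _ (eFixed (indMod N)) _ (orbitInd_fixed n).

Lemma eval1_invK n : eval1 (eval1_inv n) = n.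
Proof. by rewrite /eval1 /fval /= /orbit_fam inH1 ginv1 act_delta1. Qed.

Lemma eval1K z : eval1_inv (eval1 z) = z.
Proof.
apply: zval_inj; apply: zval_inj; apply: funext => s /=.
rewrite /orbit_fam /eval1 -/(fval z s).
by case hs: (inH s); [rewrite (fval_inH z hs) | rewrite fval_out ?hs].
Qed.

Lemma eval1_bij : bijective eval1_hom.
Proof. by exists eval1_inv; [exact: eval1K | exact: eval1_invK]. Qed.

End Eval1.

Lemma eval1_natural (M N : umodule S) (f : mhom M N) x :
  f (eval1_hom M x) = eval1_hom N (eMod_map (indMod_map f) x).
Proof. by []. Qed.

End Smash.

Theorem proposition3p1 (G : groupType) (H : set G) (A : algType CC)
    (act : G -> A -> A) :
  finite_subgroup H -> module_algebra H act ->
  has_local_units (smashG H act) /\ has_local_units (smashH H act) /\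
  morita_equivalent (smashG H act) (smashH H act).
Proof.
move=> subH modA; split; first exact: local_units_smashG.
split; first exact: local_units_smashH.
exists (eMod subH modA), (eMod_map subH modA), (indMod subH modA), (indMod_map subH modA).
exists (counit_hom subH modA), (eval1_hom subH modA).
split; first exact: eMod_functor.
split; first exact: indMod_functor.
split; first exact: counit_bij.
split; first exact: counit_natural.
split; first exact: eval1_bij.
exact: eval1_natural.
Qed.
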